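(* For every sufficiently large $n$, there exists an instance of the MaxMinDegree Arborescence problem on a layered directed graph $G$ of depth $3$ with $\Theta(n)$ vertices, such that $k_u=n^{\Omega(1)}$ for every non-sink vertex $u$, and such that the integrality gap of $1$ round (level $1$) of the Sherali-Adams hierarchy applied to the assignment LP is at least $n^{\Omega(1)}$.
   Context: MaxMinDegree Arborescence (MMDA) on layered graphs: a layered directed graph $G=(V,E)$ of depth $\ell$ has vertex set $V=L_0\dot\cup L_1\dot\cup\cdots\dot\cup L_\ell$, every edge goes from some $L_i$ to $L_{i+1}$, $L_0=\{s\}$ where $s$ is the source, and the vertices of $L_\ell$ are the sinks. Every non-sink vertex $u$ has a required out-degree $k_u>0$. For $\alpha\ge 1$, an $\alpha$-approximate integral solution is an edge set $T\subseteq E$ such that $|\delta^+_T(s)|\ge k_s/\alpha$, every vertex has in-degree at most $1$ in $T$, and every non-sink vertex $v\ne s$ with in-degree $1$ in $T$ satisfies $|\delta^+_T(v)|\ge k_v/\alpha$. The size $n$ of the instance is its number of vertices. The assignment LP has a variable $x_e$ for each $e\in E$ and constraints $x(\delta^+(s))\ge k_s$; $x(\delta^+(v))\ge k_v\, x(\delta^-(v))$ for every $v\notin\{s\}\cup L_\ell$; $x(\delta^-(v))\le 1$ for all $v$; $0\le x_e\le 1$. The level-$r$ Sherali-Adams relaxation of an LP $\{x\in[0,1]^N: a^Tx\le b \text{ for each constraint}\}$ has variables $y_I$ for $I\subseteq[N]$, $|I|\le r+1$, with $y_\emptyset=1$, and for every constraint $a^Tx\le b$ of the LP (including the bounds $0\le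 x_i\le 1$) and all disjoint $V_0,V_1\subseteq[N]$ with $|V_0|+|V_1|\le r$ it requires $\sum_{W\subseteq V_0}(-1)^{|W|}\big(b\,y_{V_1\cup W}-\sum_i a_i\, y_{V_1\cup W\cup\{i\}}\big)\ge 0$ (the linearization of $\prod_{i\in V_1}x_i\prod_{i\in V_0}(1-x_i)(b-a^Tx)\ge 0$ using $x_i^2=x_i$); the projected solution is $x_i=y_{\{i\}}$. Integrality gap of a relaxation $R$ on an instance: $\alpha_{\mathrm{int}}/\alpha_R$, where $\alpha_{\mathrm{int}}$ is the smallest $\alpha$ for which an $\alpha$-approximate integral solution exists and $\alpha_R$ is the smallest $\alpha$ for which $R$ is feasible when every $k_u$ is replaced by $k_u/\alpha$. *)

From HB Require Import structures.
From mathcomp Require Import all_boot all_order all_algebra.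
From mathcomp Require Import reals.
Import Order.TTheory GRing.Theory Num.Theory.
Local Open Scope ring_scope.

Record mmda_inst := MMDA {
  nv : nat;
  layer : 'I_nv -> nat;
  adj : rel 'I_nv;
  src : 'I_nv;
  kreq : 'I_nv -> nat }.

Set Implicit Arguments. Unset Strict Implicit. Unset Printing Implicit Defensive.

(* The edge set E, as a finite type (the LP variables are indexed by it). *)
Definition edge (I : mmda_inst) : finType :=
  {p : 'I_(nv I) * 'I_(nv I) | adj I p.1 p.2}.

Definition etail I (e : edge I) : 'I_(nv I) := (val e).1.
Definition ehead I (e : edge I) : 'I_(nv I) := (val e).2.

Definition layered (I : mmda_inst) (l : nat) : Prop :=
  [/\ layer I (src I) = 0%N /\
      (forall v, layer I v = 0%N -> v = src I),
      (forall v, (layer I v <= l)%N),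
      (forall i, (i <= l)%N -> exists v, layer I v = i),
      (forall u v, adj I u v -> layer I v = (layer I u).+1)
    & (forall u, (layer I u < l)%N -> (0 < kreq I u)%N)].

Section Defs.
Variable R : realFieldType.
Variable I : mmda_inst.
Variable l : nat.  (* depth; sinks are the vertices of layer l *)

Definition outT (T : {set edge I}) (v : 'I_(nv I)) := [set e in T | etail e == v].
Definition inT (T : {set edge I}) (v : 'I_(nv I)) := [set e in T | ehead e == v].

Definition int_sol (alpha : R) (T : {set edge I}) : Prop :=
  [/\ (kreq I (src I))%:R / alpha <= #|outT T (src I)|%:R,
      (forall v, (#|inT T v| <= 1)%N)
    & (forall v, v != src I -> layer I v != l -> #|inT T v| = 1%N ->
         (kreq I v)%:R / alpha <= #|outT T v|%:R)].

(* Level-r Sherali-Adams constraints derived from one LP constraint a^T x <= b,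
   for y : {set E} -> R (only values on sets of size <= r+1 are ever used). *)
Definition sa_constraint (E : finType) (r : nat) (y : {set E} -> R)
    (a : E -> R) (b : R) : Prop :=
  forall V0 V1 : {set E}, [disjoint V0 & V1] -> (#|V0| + #|V1| <= r)%N ->
    0 <= \sum_(W in powerset V0)
           (-1) ^+ #|W| * (b * y (V1 :|: W)
                           - \sum_(i : E) a i * y (V1 :|: W :|: [set i])).

Definition ind (b : bool) : R := if b then 1 else 0.

(* Level-r Sherali-Adams relaxation of the assignment LP with every k_u
   replaced by k_u / alpha; all LP constraints written as a^T x <= b:
   - source:   - x(delta^+(s)) <= - k_s/alpha
   - flow:     (k_v/alpha) x(delta^-(v)) - x(delta^+(v)) <= 0,  v notin {s} u L_l
   - in-deg:   x(delta^-(v)) <= 1  for all v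
   - bounds:   - x_e <= 0,  x_e <= 1. *)
Definition sa_feasible (r : nat) (alpha : R) : Prop :=
  exists y : {set edge I} -> R,
  [/\ y set0 = 1 /\
      sa_constraint r y (fun e => - ind (etail e == src I))
                        (- ((kreq I (src I))%:R / alpha)),
      (forall v, v != src I -> layer I v != l ->
         sa_constraint r y
           (fun e => (kreq I v)%:R / alpha * ind (ehead e == v)
                     - ind (etail e == v)) 0),
      (forall v, sa_constraint r y (fun e => ind (ehead e == v)) 1),
      (forall e0, sa_constraint r y (fun e => - ind (e == e0)) 0)
    & (forall e0, sa_constraint r y (fun e => ind (e == e0)) 1)].

End Defs.

Arguments int_sol {R} I l alpha T.
Arguments sa_feasible {R} I l r alpha.

(* An instance with parameter K has (K+2)^2 hubs below the source; every hub
   has K^2+K children, every child owns a private sink, and the children of a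
   hub share K sinks.  An integral alpha-approximate solution takes some hub
   and at least K/alpha of its children, each with at least K/alpha out-edges
   of which at most one is private; the K shared sinks of the hub absorb at
   most K of these edges, so (K/alpha)(K/alpha - 1) <= K and K <= 2 alpha^2.
   Fractionally, edges into hubs and private sinks get 1/(K+2) and the other
   edges 1/(K(K+2)); the level-1 Sherali-Adams values on pairs of edges come
   from conditioning inside the block of a hub, blocks being independent.
   Padding with isolated sinks gives exactly n vertices with K ~ n^(1/5), so
   the gap is n^(1/20). *)

From HB Require Import structures.
From mathcomp Require Import all_boot all_order all_algebra.
From mathcomp Require Import reals.
From mathcomp Require Import ring lra zify.
Import Order.TTheory GRing.Theory Num.Theory.
Local Open Scope ring_scope.

Set Implicit Arguments. Unset Strict Implicit. Unset Printing Implicit Defensive.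

Section SheraliAdamsLevelOne.
Variables (R : realFieldType) (E : finType) (x : E -> R) (c : E -> E -> R).
Hypothesis cond_sym : forall i j, x i * c i j = x j * c j i.
Hypothesis cond_diag : forall i, c i i = 1.

(* [c i j] plays the role of the probability of [j] conditioned on [i]; the
   level-1 constraints never read [y] on sets with more than two elements. *)
Definition sa_lift (S : {set E}) : R :=
  match enum S with
  | [::] => 1
  | [:: i] => x i
  | [:: i; j] => x i * c i j
  | _ => 0
  end.

Lemma sa_lift0 : sa_lift set0 = 1.
Proof. by rewrite /sa_lift enum_set0. Qed.

Lemma sa_lift1 j : sa_lift [set j] = x j.
Proof. by rewrite /sa_lift enum_set1. Qed.

Lemma sa_lift2 j i : sa_lift ([set j] :|: [set i]) = x j * c j i.
Proof.
have [->|nij] := eqVneq i j; first by rewrite setUid sa_lift1 cond_diag mulr1.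
have size2 : size (enum ([set j] :|: [set i])) = 2%N.
  by rewrite -cardE cards2 eq_sym nij.
have mem2 z : (z \in enum ([set j] :|: [set i])) = (z == j) || (z == i).
  by rewrite mem_enum !inE.
move: size2 (enum_uniq (mem ([set j] :|: [set i]))) mem2; rewrite /sa_lift.
case: (enum _) => [|u [|v [|? ?]]] //= _; rewrite inE andbT => nuv mem2.
have := mem2 u; have := mem2 v; rewrite !inE !eqxx orbT /= => /esym mv /esym mu.
by case/orP: mu mv nuv => /eqP -> /orP [] /eqP -> //; rewrite ?eqxx.
Qed.

(* The three hypotheses are the LP constraint itself, the constraint
   multiplied by [x j], and the constraint multiplied by [1 - x j]. *)
Lemma sa_constraint_level1 (a : E -> R) (b : R) :
  (forall j, 0 <= x j) ->
  0 <= b - \sum_i a i * x i ->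
  (forall j, 0 <= b - \sum_i a i * c j i) ->
  (forall j, x j * (b - \sum_i a i * c j i) <= b - \sum_i a i * x i) ->
  sa_constraint 1 sa_lift a b.
Proof.
move=> x_ge0 slack slack_cond slack_compl V0 V1 _ card01.
have times_x j : b * x j - \sum_i a i * sa_lift ([set j] :|: [set i]) =
                 x j * (b - \sum_i a i * c j i).
  rewrite mulrBr mulr_sumr mulrC; congr (_ - _).
  by apply: eq_bigr => i _; rewrite sa_lift2 mulrCA.
have lift_x : \sum_i a i * sa_lift (set0 :|: [set i]) = \sum_i a i * x i.
  by apply: eq_bigr => i _; rewrite set0U sa_lift1.
have [V0_0|V0_gt0] := eqVneq #|V0| 0%N.
- rewrite (cards0_eq V0_0) powerset0 big_set1 cards0 expr0 mul1r.
  have : (#|V1| <= 1)%N by rewrite V0_0 in card01.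
  rewrite leq_eqVlt ltnS leqn0; case/orP=> [/cards1P [j ->]|/eqP/cards0_eq ->].
  + by rewrite setU0 sa_lift1 times_x mulr_ge0.
  + by rewrite setU0 sa_lift0 mulr1 lift_x.
- rewrite -lt0n in V0_gt0.
  have [V0_1 V1_0] : #|V0| = 1%N /\ #|V1| = 0%N by lia.
  move/cards0_eq: V1_0 => ->; move/eqP/cards1P: V0_1 => [j ->].
  rewrite powerset1 big_setU1 /=; last first.
    by rewrite inE eq_sym; apply/negP => /eqP/setP/(_ j); rewrite !inE eqxx.
  rewrite big_set1 cards0 cards1 expr0 expr1 mul1r mulN1r !set0U.
  by rewrite sa_lift0 sa_lift1 mulr1 lift_x times_x subr_ge0.
Qed.

End SheraliAdamsLevelOne.

Lemma sq_ratio_le (R : realFieldType) (k al m : R) :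
  1 <= al -> 0 < k -> k / al <= m -> m * (k / al - 1) <= k -> k <= 2 * al ^+ 2.
Proof.
move=> al_ge1 k_gt0 m_ge m_le.
have al_gt0 : 0 < al by lra.
set t := k / al in m_ge m_le.
have kE : k = t * al by rewrite /t divfK // gt_eqF.
have t_gt0 : 0 < t by rewrite /t divr_gt0.
have [t_le2|t_gt2] := lerP t 2; first by rewrite kE; nra.
have tt_le : t * (t - 1) <= k by nra.
have : t * t <= 2 * k by nra.
by rewrite kE => ?; nra.
Qed.

Section Instance.
Variables (K pad : nat).
Hypothesis K_ge2 : (2 <= K)%N.

Definition n_hubs := (K.+2 * K.+2)%N.
Definition n_children := (K * K + K)%N.
Local Notation hub := 'I_n_hubs.
Local Notation child := 'I_n_children.
Local Notation slot := 'I_K.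
Local Notation vertex :=
  ((unit + hub) + ((hub * child) + ((hub * child) + ((hub * slot) + 'I_pad))))%type.

Inductive vkind :=
  | KSource
  | KHub of hub
  | KChild of hub & child
  | KPrivate of hub & child
  | KShared of hub & slot
  | KPadding.

Definition kind (v : vertex) : vkind :=
  match v with
  | inl (inl _) => KSource
  | inl (inr a) => KHub a
  | inr (inl (a, i)) => KChild a i
  | inr (inr (inl (a, i))) => KPrivate a i
  | inr (inr (inr (inl (a, k)))) => KShared a k
  | _ => KPadding
  end.

Definition vSource : vertex := inl (inl tt).
Definition vHub a : vertex := inl (inr a).
Definition vChild a i : vertex := inr (inl (a, i)).
Definition vPrivate a i : vertex := inr (inr (inl (a, i))).
Definition vShared a k : vertex := inr (inr (inr (inl (a, k)))).
Definition vPadding j : vertex := inr (inr (inr (inr j))).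

Definition arc (p q : vertex) : bool :=
  match kind p, kind q with
  | KSource, KHub _ => true
  | KHub a, KChild a' _ => a == a'
  | KChild a i, KPrivate a' i' => (a == a') && (i == i')
  | KChild a _, KShared a' _ => a == a'
  | _, _ => false
  end.

Definition depth (v : vertex) : nat :=
  match kind v with KSource => 0 | KHub _ => 1 | KChild _ _ => 2 | _ => 3 end.

Definition vertex_of (u : 'I_#|{: vertex}|) : vertex := enum_val u.

Definition inst : mmda_inst :=
  MMDA #|{: vertex}| (fun u => depth (vertex_of u))
       (fun u v => arc (vertex_of u) (vertex_of v)) (enum_rank vSource) (fun _ => K).

Lemma vertex_of_rank v : vertex_of (enum_rank v) = v.
Proof. exact: enum_rankK. Qed.

Lemma rank_vertex_of u : enum_rank (vertex_of u) = u.
Proof. exact: enum_valK. Qed.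

Lemma vertex_of_inj : injective vertex_of.
Proof. exact: enum_val_inj. Qed.

Lemma vertex_of_src : vertex_of (src inst) = vSource.
Proof. exact: vertex_of_rank. Qed.

Lemma inst_layered : layered inst 3.
Proof.
have child0 : (0 < n_children)%N by rewrite addn_gt0 (leq_trans _ K_ge2) ?orbT.
split.
- split; first by rewrite /= vertex_of_src.
  move=> v /=; rewrite /depth.
  case E : (vertex_of v) => [[[]|?]|[[? ?]|[[? ?]|[[? ?]|?]]]] //= _.
  by rewrite -(rank_vertex_of v) E.
- by move=> v /=; rewrite /depth; case: (kind (vertex_of v)).
- have a0 : hub by exists 0%N.
  have i0 : child by exists 0%N.
  move=> [|[|[|[|l]]]] // _.
  + by exists (src inst); rewrite /= vertex_of_src.
  + by exists (enum_rank (vHub a0)); rewrite /= vertex_of_rank.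
  + by exists (enum_rank (vChild a0 i0)); rewrite /= vertex_of_rank.
  + by exists (enum_rank (vPrivate a0 i0)); rewrite /= vertex_of_rank.
- move=> u v /=; rewrite /depth /arc.
  by case: (vertex_of u) => [[[]|?]|[[? ?]|[[? ?]|[[? ?]|?]]]];
     case: (vertex_of v) => [[[]|?]|[[? ?]|[[? ?]|[[? ?]|?]]]].
- by move=> *; exact: leq_trans K_ge2.
Qed.

Lemma card_vertex :
  #|{: vertex}| = (1 + n_hubs * (1 + 2 * n_children + K) + pad)%N.
Proof. by rewrite !card_sum card_unit !card_prod !card_ord; lia. Qed.

Variable R : realFieldType.

Lemma sum_pair (I J : finType) (F : I * J -> R) :
  \sum_p F p = \sum_i \sum_j F (i, j).
Proof. by rewrite pair_big; apply: eq_bigr => -[]. Qed.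

Lemma sum_vertex (F : vertex -> R) : \sum_v F v =
  F vSource + \sum_a F (vHub a) + \sum_a \sum_i F (vChild a i)
  + \sum_a \sum_i F (vPrivate a i) + \sum_a \sum_k F (vShared a k)
  + \sum_j F (vPadding j).
Proof. by rewrite !big_sumType (big_pred1 tt) // !sum_pair /= !addrA. Qed.

Lemma sum_if_eq (I : finType) (a : I) (F : I -> R) :
  \sum_a' (if a' == a then F a' else 0) = F a.
Proof. by rewrite -big_mkcond big_pred1_eq. Qed.

Lemma sum_if_eq_outer (I J : finType) (a : I) (G : I -> J -> R) :
  \sum_a' \sum_j (if a' == a then G a' j else 0) = \sum_j G a j.
Proof.
rewrite -(sum_if_eq a (fun a' => \sum_j G a' j)); apply: eq_bigr => a' _.
by case: eqP => _; rewrite ?big1_eq.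
Qed.

Lemma sum_if_eqC_outer (I J : finType) (a : I) (G : I -> J -> R) :
  \sum_a' \sum_j (if a == a' then G a' j else 0) = \sum_j G a j.
Proof.
rewrite -(sum_if_eq_outer a G); apply: eq_bigr => a' _.
by apply: eq_bigr => j _; rewrite eq_sym.
Qed.

Lemma sum_if_eq2 (I J : finType) (a : I) (i : J) (G : I -> J -> R) :
  \sum_a' \sum_j (if (a' == a) && (j == i) then G a' j else 0) = G a i.
Proof.
have -> : G a i = \sum_a' \sum_j (if a' == a then if j == i then G a' j else 0 else 0).
  by rewrite sum_if_eq_outer sum_if_eq.
by apply: eq_bigr => a' _; apply: eq_bigr => j _; case: (a' == a).
Qed.

Lemma sum_if_eqC2 (I J : finType) (a : I) (i : J) (G : I -> J -> R) :
  \sum_a' \sum_j (if (a == a') && (i == j) then G a' j else 0) = G a i.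
Proof.
rewrite -(sum_if_eq2 a i G); apply: eq_bigr => a' _; apply: eq_bigr => j _.
by rewrite (eq_sym a) (eq_sym i).
Qed.

Ltac neighbour_sum :=
  rewrite big_mkcond sum_vertex /arc /= ?big1_eq ?add0r ?addr0
    ?sum_if_eq ?sum_if_eq2 ?sum_if_eqC2
    ?sum_if_eq_outer ?sum_if_eqC_outer.

Lemma sum_vertex_of (H : vertex -> R) : \sum_u H (vertex_of u) = \sum_p H p.
Proof. by rewrite (reindex vertex_of) //; apply: onW_bij; exact: enum_val_bij. Qed.

Lemma sum_edges (G : vertex -> vertex -> R) :
  \sum_(e : edge inst) G (vertex_of (etail e)) (vertex_of (ehead e)) =
  \sum_p \sum_(q | arc p q) G p q.
Proof.
pose F (u : 'I_#|{: vertex}| * 'I_#|{: vertex}|) := G (vertex_of u.1) (vertex_of u.2).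
rewrite -[LHS]/(\sum_(e : edge inst) F (val e)) -(big_imset _ (in2W val_inj)) /=.
rewrite (eq_bigl (fun u => arc (vertex_of u.1) (vertex_of u.2))); last first.
  move=> u; apply/imsetP/idP => [[e _ ->]|arc_u]; first exact: (valP e).
  by exists (exist _ u arc_u).
rewrite -(pair_big_dep xpredT (fun u1 u2 => arc (vertex_of u1) (vertex_of u2))
                       (fun u1 u2 => F (u1, u2))) /=.
rewrite -sum_vertex_of; apply: eq_bigr => u1 _.
by rewrite big_mkcond [RHS]big_mkcond -sum_vertex_of.
Qed.

Lemma sum_edges_into (v : 'I_#|{: vertex}|) (f : vertex -> vertex -> R) :
  \sum_(e : edge inst)
     ind R (ehead e == v) * f (vertex_of (etail e)) (vertex_of (ehead e)) =
  \sum_(p | arc p (vertex_of v)) f p (vertex_of v).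
Proof.
under eq_bigr => e _ do rewrite -(inj_eq vertex_of_inj).
rewrite (sum_edges (fun p q => ind R (q == vertex_of v) * f p q)) [RHS]big_mkcond.
apply: eq_bigr => p _; rewrite big_mkcond (bigD1 (vertex_of v)) //= big1 ?addr0.
  by case: (arc p _); rewrite /ind ?eqxx ?mul1r.
by move=> q /negbTE q_ne; rewrite q_ne; case: (arc p q); rewrite /ind ?mul0r.
Qed.

Lemma sum_edges_from (v : 'I_#|{: vertex}|) (f : vertex -> vertex -> R) :
  \sum_(e : edge inst)
     ind R (etail e == v) * f (vertex_of (etail e)) (vertex_of (ehead e)) =
  \sum_(q | arc (vertex_of v) q) f (vertex_of v) q.
Proof.
under eq_bigr => e _ do rewrite -(inj_eq vertex_of_inj).
rewrite (sum_edges (fun p q => ind R (p == vertex_of v) * f p q)).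
rewrite (bigD1 (vertex_of v)) //= [X in _ + X]big1 ?addr0.
  by apply: eq_bigr => q _; rewrite /ind eqxx mul1r.
by move=> p /negbTE p_ne; apply: big1 => q _; rewrite /ind p_ne mul0r.
Qed.

Inductive ekind := EHub | EChild of child | EPrivate of child | EShared of child & slot.

Lemma n_hubs_gt0 : (0 < n_hubs)%N. Proof. by rewrite muln_gt0. Qed.

(* Every edge lies in the block of a unique hub; [code] records that hub and
   the position of the edge in the block (the last case is never reached by
   an edge). *)
Definition ecode (p q : vertex) : hub * ekind :=
  match kind p, kind q with
  | _, KHub a => (a, EHub)
  | _, KChild a i => (a, EChild i)
  | _, KPrivate a i => (a, EPrivate i)
  | KChild _ i, KShared a k => (a, EShared i k)
  | _, _ => (Ordinal n_hubs_gt0, EHub)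
  end.

Definition code (e : edge inst) := ecode (vertex_of (etail e)) (vertex_of (ehead e)).

Definition inflow (Z : hub * ekind -> R) (w : vertex) : R :=
  match kind w with
  | KHub a => Z (a, EHub)
  | KChild a i => Z (a, EChild i)
  | KPrivate a i => Z (a, EPrivate i)
  | KShared a k => \sum_i Z (a, EShared i k)
  | _ => 0
  end.

Definition outflow (Z : hub * ekind -> R) (w : vertex) : R :=
  match kind w with
  | KSource => \sum_a Z (a, EHub)
  | KHub a => \sum_i Z (a, EChild i)
  | KChild a i => Z (a, EPrivate i) + \sum_k Z (a, EShared i k)
  | _ => 0
  end.

Lemma sum_inflow v (Z : hub * ekind -> R) :
  \sum_(e : edge inst) ind R (ehead e == v) * Z (code e) = inflow Z (vertex_of v).
Proof.
rewrite (sum_edges_into v (fun p q => Z (ecode p q))).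
by case: (vertex_of v) => [[[]|a]|[[a i]|[[a i]|[[a k]|j]]]]; neighbour_sum.
Qed.

Lemma sum_outflow v (Z : hub * ekind -> R) :
  \sum_(e : edge inst) ind R (etail e == v) * Z (code e) = outflow Z (vertex_of v).
Proof.
rewrite (sum_edges_from v (fun p q => Z (ecode p q))).
by case: (vertex_of v) => [[[]|a]|[[a i]|[[a i]|[[a k]|j]]]]; neighbour_sum.
Qed.

Definition kr : R := K%:R.
Definition theta : R := (K.+2)%:R^-1.

Definition marg (l : ekind) : R :=
  match l with
  | EHub | EPrivate _ => theta
  | EChild _ | EShared _ _ => theta / kr
  end.

(* [cond cj ce] is the value of [ce] in the solution conditioned on [cj]:
   [cond_block] inside one block, independence across blocks. *)
Definition cond_block (lj le : ekind) : R :=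
  match lj, le with
  | (EHub | EPrivate _), (EHub | EPrivate _) => 1
  | (EHub | EPrivate _), EChild _ => 1 / kr
  | (EHub | EPrivate _), EShared _ _ => 0
  | EChild _, (EHub | EPrivate _) => 1
  | EChild i, EChild i' => if i' == i then 1 else 1 / kr
  | EChild i, EShared i' _ => if i' == i then 1 else 0
  | EShared _ _, (EHub | EPrivate _) => 0
  | EShared i _, EChild i' => if i' == i then 1 else 0
  | EShared i _, EShared i' _ => if i' == i then 1 else 0
  end.

Definition cond (cj ce : hub * ekind) : R :=
  if cj.1 == ce.1 then cond_block cj.2 ce.2 else marg ce.2.

Lemma kr_ge2 : 2 <= kr.
Proof. by rewrite /kr (ler_nat R 2). Qed.

Lemma kr_gt0 : 0 < kr.
Proof. by have := kr_ge2; lra. Qed.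

Lemma kr_neq0 : kr != 0.
Proof. by rewrite gt_eqF // kr_gt0. Qed.

Lemma theta_gt0 : 0 < theta.
Proof. by rewrite /theta invr_gt0 ltr0n. Qed.

Lemma thetaE : theta * (kr + 2) = 1.
Proof. by rewrite /theta /kr -natrD addn2 mulVf // pnatr_eq0. Qed.

Lemma theta_le : theta <= 1 / 4.
Proof. by have := thetaE; have := kr_ge2; have := theta_gt0; nra. Qed.

Lemma n_hubs_theta : (n_hubs%:R : R) * theta = kr + 2.
Proof. by rewrite /n_hubs natrM /theta mulfK ?pnatr_eq0 // /kr -natrD addn2. Qed.

Lemma n_children_kr : (n_children%:R : R) = kr * kr + kr.
Proof. by rewrite /n_children natrD natrM. Qed.

Lemma marg_ge0 l : 0 <= marg l.
Proof. by case: l => *; rewrite ?divr_ge0 ?ltW ?theta_gt0 ?kr_gt0. Qed.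

Lemma theta_div_kr_le : theta / kr <= theta.
Proof.
by rewrite ler_pdivrMr ?kr_gt0 //; have := kr_ge2; have := theta_gt0; nra.
Qed.

Lemma marg_le_theta l : marg l <= theta.
Proof. by case: l => * /=; rewrite ?lexx ?theta_div_kr_le. Qed.

Lemma marg_le1 l : marg l <= 1.
Proof. by have := marg_le_theta l; have := theta_le; lra. Qed.

Lemma inv_kr_ge0 : 0 <= 1 / kr.
Proof. by rewrite divr_ge0 // ltW ?kr_gt0. Qed.

Lemma inv_kr_le1 : 1 / kr <= 1.
Proof. by rewrite ler_pdivrMr ?kr_gt0 // mul1r; have := kr_ge2; lra. Qed.

Lemma cond_ge0 cj ce : 0 <= cond cj ce.
Proof.
rewrite /cond; case: ifP => _; rewrite ?marg_ge0 //.
by case: cj.2 => *; case: ce.2 => * /=; try case: ifP => _; rewrite ?inv_kr_ge0 ?ler01.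
Qed.

Lemma cond_le1 cj ce : cond cj ce <= 1.
Proof.
rewrite /cond; case: ifP => _; rewrite ?marg_le1 //.
by case: cj.2 => *; case: ce.2 => * /=; try case: ifP => _; rewrite ?inv_kr_le1 ?ler01.
Qed.

Lemma cond_diag c : cond c c = 1.
Proof. by rewrite /cond eqxx; case: c.2 => * /=; rewrite ?eqxx. Qed.

Lemma cond_sym cj ce : marg cj.2 * cond cj ce = marg ce.2 * cond ce cj.
Proof.
case: cj => a lj; case: ce => b le; rewrite /cond /= (eq_sym b).
case: (a == b); last by rewrite mulrC.
case: lj => [|i|i|i k]; case: le => [|i'|i'|i' k'] //=; rewrite ?(eq_sym i i');
  try case: (i' == i); rewrite ?mulr1 ?mul1r ?mulr0 ?mul0r ?div1r //.
Qed.

Local Notation margc := (fun c : hub * ekind => marg c.2).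

Lemma sum_const (T : finType) (c : R) : \sum_(i : T) c = #|T|%:R * c.
Proof. by rewrite sumr_const mulr_natl. Qed.

Lemma sum_if_eq_const (T : finType) (i0 : T) (c d : R) :
  \sum_i (if i == i0 then c else d) = (#|T|%:R - 1) * d + c.
Proof.
rewrite (eq_bigr (fun i => d + (if i == i0 then c - d else 0))); last first.
  by move=> i _; case: ifP => _; rewrite ?addr0 // addrC subrK.
by rewrite big_split /= sum_const sum_if_eq; ring.
Qed.

Lemma cond_split cj a l :
  cond cj (a, l) = marg l + (if cj.1 == a then cond_block cj.2 l - marg l else 0).
Proof. by rewrite /cond /=; case: ifP => _; rewrite ?addr0 // addrC subrK. Qed.

Ltac flow_facts := have := thetaE; have := kr_ge2; have := theta_gt0;
  have := mulVf kr_neq0; have := kr_gt0; have : 0 < kr^-1 by rewrite invr_gt0 kr_gt0.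

Lemma outflow_source_marg : outflow margc vSource - kr = 2.
Proof. by rewrite /outflow /= sum_const card_ord n_hubs_theta; ring. Qed.

Lemma outflow_source_cond cj : 2 - theta <= outflow (cond cj) vSource - kr <= 3.
Proof.
rewrite /outflow /=.
under eq_bigr => a _ do rewrite cond_split /= (eq_sym cj.1).
rewrite big_split /= sum_const sum_if_eq card_ord n_hubs_theta.
have := theta_le; have := theta_gt0.
case: cj.2 => * /=; apply/andP; split; try case: ifP => _; lra.
Qed.

Lemma flow_hub_marg a : outflow margc (vHub a) - kr * inflow margc (vHub a) = theta.
Proof.
by rewrite /outflow /inflow /= sum_const card_ord n_children_kr; flow_facts; nra.
Qed.

Lemma flow_hub_cond cj a :
  0 <= outflow (cond cj) (vHub a) - kr * inflow (cond cj) (vHub a) /\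
  marg cj.2 * (outflow (cond cj) (vHub a) - kr * inflow (cond cj) (vHub a)) <= theta.
Proof.
have := marg_le1 cj.2; have := marg_ge0 cj.2.
rewrite /outflow /inflow /= /cond /=; case: eqP => _; last first.
  rewrite sum_const card_ord n_children_kr.
  have -> : (kr * kr + kr) * (theta / kr) - kr * theta = theta by field; exact: kr_neq0.
  by have := theta_gt0; move=> *; split; nra.
have e1 : (kr * kr + kr) / kr = kr + 1 by field; exact: kr_neq0.
have e2 : (kr * kr + kr - 1) / kr = kr + 1 - kr^-1 by field; exact: kr_neq0.
case: cj.2 => [|i|i|i k] /=;
  rewrite ?sum_const ?sum_if_eq_const ?card_ord ?n_children_kr ?div1r ?big1_eq
          ?e1 ?e2;
  flow_facts; split; nra.
Qed.

Lemma flow_child_marg a i :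
  outflow margc (vChild a i) - kr * inflow margc (vChild a i) = theta.
Proof. by rewrite /outflow /inflow /= sum_const card_ord; flow_facts; nra. Qed.

Lemma flow_child_cond cj a i :
  0 <= outflow (cond cj) (vChild a i) - kr * inflow (cond cj) (vChild a i) /\
  marg cj.2 * (outflow (cond cj) (vChild a i) - kr * inflow (cond cj) (vChild a i))
    <= theta.
Proof.
have := marg_le1 cj.2; have := marg_ge0 cj.2.
rewrite /outflow /inflow /= /cond /=; case: eqP => _; last first.
  rewrite sum_const card_ord.
  have -> : theta + kr * (theta / kr) - kr * (theta / kr) = theta by ring.
  by have := theta_gt0; move=> *; split; nra.
case: cj.2 => [|i'|i'|i' k] /=; rewrite ?sum_const ?card_ord ?div1r ?big1_eq;
  try case: eqP => _; rewrite ?sum_const ?card_ord -/kr; flow_facts; split; nra.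
Qed.

Lemma inflow_marg_le w : inflow margc w <= 1 - theta.
Proof.
have := theta_le; have := theta_div_kr_le.
rewrite /inflow; case: (kind w) => * /=; rewrite ?sum_const ?card_ord ?n_children_kr;
  flow_facts; nra.
Qed.

Lemma inflow_cond_bounds cj w : 0 <= inflow (cond cj) w <= 1.
Proof.
rewrite /inflow; case: (kind w) => *; rewrite ?cond_ge0 ?cond_le1 ?lexx ?ler01 //.
rewrite /cond /=; case: eqP => _; last first.
  rewrite sum_const card_ord n_children_kr; flow_facts.
  by move=> *; apply/andP; split; nra.
by case: cj.2 => [|i|i|i k] /=; rewrite ?big1_eq ?lexx ?ler01 // sum_if_eq lexx ler01.
Qed.

Definition x_lp (e : edge inst) : R := marg (code e).2.
Definition cond_lp (j e : edge inst) : R := cond (code j) (code e).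
Local Notation y_lp := (sa_lift x_lp cond_lp).

Lemma sa_constraint_lp (a : edge inst -> R) (b : R) (slack : (hub * ekind -> R) -> R) :
  (forall Z, b - \sum_e a e * Z (code e) = slack Z) ->
  0 <= slack margc ->
  (forall cj, 0 <= slack (cond cj)) ->
  (forall cj, marg cj.2 * slack (cond cj) <= slack margc) ->
  sa_constraint 1 y_lp a b.
Proof.
move=> slackE slack_x slack_cond slack_compl.
apply: sa_constraint_level1 => [i j|i|j||j|j].
- exact: cond_sym.
- exact: cond_diag.
- exact: marg_ge0.
- by rewrite (slackE margc).
- by rewrite (slackE (cond (code j))).
- by rewrite (slackE (cond (code j))) (slackE margc); exact: slack_compl.
Qed.

Lemma sum_ind_eq (e0 : edge inst) (F : edge inst -> R) :
  \sum_e ind R (e == e0) * F e = F e0.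
Proof.
rewrite (bigD1 e0) //= big1 ?addr0 /ind ?eqxx ?mul1r //.
by move=> e /negbTE ->; rewrite mul0r.
Qed.

Lemma sa_source :
  sa_constraint 1 y_lp (fun e => - ind R (etail e == src inst)) (- (K%:R / 1)).
Proof.
apply: (@sa_constraint_lp _ _ (fun Z => outflow Z vSource - kr)).
- move=> Z; under eq_bigr => e _ do rewrite mulNr.
  by rewrite divr1 sumrN (sum_outflow (src inst) Z) vertex_of_src opprK addrC.
- by rewrite outflow_source_marg.
- by move=> cj; case/andP: (outflow_source_cond cj); have := theta_le; lra.
- move=> cj; rewrite outflow_source_marg; case/andP: (outflow_source_cond cj).
  by have := marg_le_theta cj.2; have := marg_ge0 cj.2; have := theta_le; nra.
Qed.

Lemma sa_flow v : v != src inst -> layer inst v != 3%N ->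
  sa_constraint 1 y_lp
    (fun e => K%:R / 1 * ind R (ehead e == v) - ind R (etail e == v)) 0.
Proof.
move=> v_ns v_nsink.
have slackE Z :
    0 - \sum_e (K%:R / 1 * ind R (ehead e == v) - ind R (etail e == v)) * Z (code e)
    = outflow Z (vertex_of v) - kr * inflow Z (vertex_of v).
  rewrite divr1; under eq_bigr => e _ do rewrite mulrBl -mulrA.
  by rewrite sub0r sumrB -mulr_sumr sum_inflow sum_outflow /kr opprB.
have : vertex_of v != vSource.
  by apply: contra v_ns => /eqP v_src; rewrite -(rank_vertex_of v) v_src.
move: v_nsink slackE; rewrite /= /depth.
case: (vertex_of v) => [[[]|a]|[[a i]|[[a i]|[[a k]|j]]]] //= _ slackE _;
  apply: (sa_constraint_lp slackE).
- by rewrite flow_hub_marg ltW ?theta_gt0.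
- by move=> cj; case: (flow_hub_cond cj a).
- by move=> cj; rewrite flow_hub_marg; case: (flow_hub_cond cj a).
- by rewrite flow_child_marg ltW ?theta_gt0.
- by move=> cj; case: (flow_child_cond cj a i).
- by move=> cj; rewrite flow_child_marg; case: (flow_child_cond cj a i).
Qed.

Lemma sa_indegree v : sa_constraint 1 y_lp (fun e => ind R (ehead e == v)) 1.
Proof.
apply: (@sa_constraint_lp _ _ (fun Z => 1 - inflow Z (vertex_of v))).
- by move=> Z; rewrite sum_inflow.
- by have := inflow_marg_le (vertex_of v); have := theta_gt0; lra.
- by move=> cj; case/andP: (inflow_cond_bounds cj (vertex_of v)); lra.
- move=> cj; have := inflow_marg_le (vertex_of v).
  case/andP: (inflow_cond_bounds cj (vertex_of v)).
  by have := marg_le_theta cj.2; have := marg_ge0 cj.2; nra.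
Qed.

Lemma sa_nonneg e0 : sa_constraint 1 y_lp (fun e => - ind R (e == e0)) 0.
Proof.
apply: (@sa_constraint_lp _ _ (fun Z => Z (code e0))).
- move=> Z; under eq_bigr => e _ do rewrite mulNr.
  by rewrite sumrN (sum_ind_eq e0 (fun e => Z (code e))) sub0r opprK.
- exact: marg_ge0.
- by move=> cj; rewrite cond_ge0.
- move=> cj; rewrite cond_sym.
  by have := cond_le1 (code e0) cj; have := marg_ge0 (code e0).2; nra.
Qed.

Lemma sa_le1 e0 : sa_constraint 1 y_lp (fun e => ind R (e == e0)) 1.
Proof.
apply: (@sa_constraint_lp _ _ (fun Z => 1 - Z (code e0))).
- by move=> Z; rewrite (sum_ind_eq e0 (fun e => Z (code e))).
- by rewrite subr_ge0 marg_le1.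
- by move=> cj; rewrite subr_ge0 cond_le1.
- move=> cj; have := cond_le1 cj (code e0); have := cond_ge0 cj (code e0).
  have := marg_le_theta (code e0).2; have := marg_le_theta cj.2.
  by have := marg_ge0 cj.2; have := theta_le; nra.
Qed.

Lemma inst_sa_feasible : sa_feasible inst 3 1 (1 : R).
Proof.
exists y_lp; split.
- by split; [exact: sa_lift0 | exact: sa_source].
- exact: sa_flow.
- exact: sa_indegree.
- exact: sa_nonneg.
- exact: sa_le1.
Qed.

Section IntegralSolution.
Variables (al : R) (T : {set edge inst}).
Hypotheses (al_ge1 : 1 <= al) (T_sol : int_sol inst 3 al T).

Lemma head_inj : {in T &, injective (@ehead inst)}.
Proof.
case: T_sol => _ indeg_le1 _ e1 e2 e1T e2T same_head.
move/card_le1_eqP: (indeg_le1 (ehead e1)); apply;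
  by rewrite !inE ?e1T ?e2T ?same_head ?eqxx.
Qed.

Lemma indeg_head e : e \in T -> #|inT T (ehead e)| = 1%N.
Proof.
case: T_sol => _ indeg_le1 _ eT; apply/eqP; rewrite eqn_leq indeg_le1 card_gt0.
by apply/set0Pn; exists e; rewrite inE eT eqxx.
Qed.

Lemma outdeg_head e : e \in T -> depth (vertex_of (ehead e)) != 3%N ->
  kr / al <= #|outT T (ehead e)|%:R.
Proof.
case: T_sol => _ _ outdeg eT not_sink; apply: outdeg => //; last exact: indeg_head.
apply: contraTneq (valP e) => head_src.
by rewrite /= -/(ehead e) head_src vertex_of_src /arc; case: (kind _).
Qed.

Lemma hub_chosen : exists u a, vertex_of u = vHub a /\ kr / al <= #|outT T u|%:R.
Proof.
case: T_sol => src_out _ _.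
have : (0 < #|outT T (src inst)|)%N.
  rewrite -(ltr0n R); apply: lt_le_trans src_out.
  by rewrite divr_gt0 ?kr_gt0 // (lt_le_trans ltr01).
case/card_gt0P => e; rewrite inE => /andP [eT /eqP e_src].
have := valP e; rewrite /= -/(etail e) -/(ehead e) e_src vertex_of_src /arc.
case E : (vertex_of (ehead e)) => [[[]|a]|[[? ?]|[[? ?]|[[? ?]|?]]]] // _.
by exists (ehead e), a; split => //; apply: outdeg_head; rewrite ?E.
Qed.

Definition is_shared_of (a : hub) (w : vertex) : bool :=
  if kind w is KShared a' _ then a' == a else false.

Variables (u : 'I_#|{: vertex}|) (a : hub).
Hypothesis u_hub : vertex_of u = vHub a.

Let B := (@ehead inst) @: outT T u.
Let S := [set e in T | (etail e \in B) && is_shared_of a (vertex_of (ehead e))].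

Lemma child_of_hub b : b \in B ->
  exists i, vertex_of b = vChild a i /\ kr / al <= #|outT T b|%:R.
Proof.
case/imsetP => e; rewrite inE => /andP [eT /eqP e_u] ->.
have := valP e; rewrite /= -/(etail e) -/(ehead e) e_u u_hub /arc.
case E : (vertex_of (ehead e)) => [[[]|?]|[[a' i]|[[? ?]|[[? ?]|?]]]] //= /eqP <-.
by exists i; split => //; apply: outdeg_head; rewrite ?E.
Qed.

Lemma card_children : #|B| = #|outT T u|.
Proof.
apply: card_in_imset => e1 e2; rewrite !inE => /andP [e1T _] /andP [e2T _].
exact: head_inj.
Qed.

Lemma card_shared_le : (#|S| <= K)%N.
Proof.
have S_T : {subset S <= T} by move=> e; rewrite inE => /andP [].
have heads_shared :
    (@ehead inst) @: S \subset [set enum_rank (vShared a k) | k in [set: slot]].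
  apply/subsetP => _ /imsetP [e + ->]; rewrite inE /is_shared_of => /and3P [_ _].
  case E : (vertex_of (ehead e)) => [[[]|?]|[[? ?]|[[? ?]|[[a' k]|?]]]] //= /eqP a'_a.
  by apply/imsetP; exists k; rewrite ?in_setT // -a'_a /vShared -E rank_vertex_of.
rewrite -(card_in_imset (sub_in2 S_T head_inj)).
apply: leq_trans (subset_leq_card heads_shared) _.
by rewrite (leq_trans (leq_imset_card _ _)) // cardsT card_ord.
Qed.

Lemma outdeg_child_le b : b \in B ->
  (#|outT T b| <= #|[set e in S | etail e == b]| + 1)%N.
Proof.
move=> bB; have [i [b_child _]] := child_of_hub bB.
have split_out : outT T b \subset
    [set e in S | etail e == b] :|: inT T (enum_rank (vPrivate a i)).
  apply/subsetP => e; rewrite !inE => /andP [eT /eqP e_b].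
  have := valP e; rewrite /= -/(etail e) -/(ehead e) e_b b_child /arc.
  case E : (vertex_of (ehead e)) => [[[]|?]|[[? ?]|[[a' i']|[[a' k]|?]]]] //=.
  - case/andP => /eqP -> /eqP ->.
    by rewrite eT -(rank_vertex_of (ehead e)) E /vPrivate !eqxx /= orbT.
  - by move=> /eqP <-; rewrite eT bB /is_shared_of /= !eqxx.
apply: leq_trans (subset_leq_card split_out) _.
case: T_sol => _ indeg_le1 _.
by rewrite cardsU (leq_trans (leq_subr _ _)) // leq_add2l.
Qed.

Lemma shared_lower_bound : #|outT T u|%:R * (kr / al - 1) <= #|S|%:R.
Proof.
have partition_S : #|S| = (\sum_(b in B) #|[set e in S | etail e == b]|)%N.
  rewrite -sum1_card (partition_big (@etail inst) (mem B)) /=; last first.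
    by move=> e; rewrite inE => /and3P [].
  by apply: eq_bigr => b _; rewrite sum1dep_card.
rewrite partition_S natr_sum -card_children mulr_natl -sumr_const.
apply: ler_sum => b bB.
have [_ [_ outdeg_b]] := child_of_hub bB.
have := outdeg_child_le bB; rewrite -(ler_nat R) natrD; lra.
Qed.

End IntegralSolution.

Lemma int_sol_kr_le (al : R) (T : {set edge inst}) :
  1 <= al -> int_sol inst 3 al T -> kr <= 2 * al ^+ 2.
Proof.
move=> al_ge1 T_sol; have [u [a [u_hub outdeg_u]]] := hub_chosen al_ge1 T_sol.
apply: (sq_ratio_le al_ge1 kr_gt0 outdeg_u).
apply: le_trans (shared_lower_bound T_sol u_hub) _.
by rewrite /kr ler_nat (card_shared_le T_sol).
Qed.

End Instance.

Lemma le_pow20_of_sq_le (R : realFieldType) (al k n : R) :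
  8 <= k -> k <= 2 * al ^+ 2 -> n <= k ^+ 5 -> n <= al ^+ 20.
Proof.
move=> k_ge8 k_le n_le.
have al2_ge4 : 4 <= al ^+ 2 by lra.
have k5_le : k ^+ 5 <= 32 * (al ^+ 2) ^+ 5.
  have -> : 32 * (al ^+ 2) ^+ 5 = (2 * al ^+ 2) ^+ 5 by ring.
  by apply: lerXn2r; rewrite ?nnegrE //; lra.
have al10_ge : 32 <= (al ^+ 2) ^+ 5.
  have : 4 ^+ 5 <= (al ^+ 2) ^+ 5 by apply: lerXn2r; rewrite ?nnegrE //; lra.
  have -> : 4 ^+ 5 = 1024 :> R by ring.
  lra.
have al10_ge0 : 0 <= (al ^+ 2) ^+ 5 by rewrite exprn_ge0 ?sqr_ge0.
rewrite (_ : 20 = 2 * 5 + 2 * 5)%N // exprD !exprM.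
by apply: (le_trans n_le); apply: (le_trans k5_le); rewrite ler_wpM2r.
Qed.

Lemma fifth_root_bracket n : (7 ^ 5 < n)%N ->
  exists K, [/\ (8 <= K)%N, ((K - 1) ^ 5 < n)%N & (n <= K ^ 5)%N].
Proof.
move=> n_gt.
have ex_root : exists K, (n <= K ^ 5)%N.
  by exists n; rewrite -[X in (X <= _)%N]expn1 leq_pexp2l //; case: n n_gt.
case: (ex_minnP ex_root) => K n_le K_min; exists K; split => //.
- rewrite leqNgt; apply/negP => K_lt8.
  have : (K ^ 5 <= 7 ^ 5)%N by rewrite leq_exp2r // -ltnS.
  lia.
- by rewrite ltnNge; apply/negP => /K_min; lia.
Qed.

Lemma card_base_le K : (8 <= K)%N ->
  (1 + n_hubs K * (1 + 2 * n_children K + K) <= (K - 1) ^ 5)%N.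
Proof.
move=> K_ge8; rewrite /n_hubs /n_children.
have -> : K = (K - 8 + 8)%N by lia.
move: (K - 8)%N => j; rewrite (_ : j + 8 - 1 = j + 7)%N; last by lia.
rewrite !expnS expn0 muln1; nia.
Qed.

Theorem theorem1 (R : realType) :
  exists (c1 c2 p q n0 : nat),
    [/\ (0 < c1)%N, (0 < c2)%N, (0 < p)%N & (0 < q)%N] /\
    forall n : nat, (n0 <= n)%N ->
      exists I : mmda_inst,
        [/\ layered I 3,
            (n <= c1 * nv I)%N /\ (nv I <= c2 * n)%N,
            (forall u, (layer I u < 3)%N -> (n <= kreq I u ^ p)%N)
          & exists beta : R, 0 < beta /\ sa_feasible I 3 1 beta /\
              forall alpha : R, 1 <= alpha ->
                (exists T, int_sol I 3 alpha T) ->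
                n%:R <= (alpha / beta) ^+ q].
Proof.
exists 1%N, 1%N, 5%N, 20%N, (7 ^ 5).+1; split => // n n_gt.
have [K [K_ge8 base_lt n_le]] := fifth_root_bracket n_gt.
have K_ge2 : (2 <= K)%N by lia.
pose pad := (n - (1 + n_hubs K * (1 + 2 * n_children K + K)))%N.
have size_n : nv (inst K pad) = n.
  by rewrite /= card_vertex; have := card_base_le K_ge8; lia.
exists (inst K pad); split.
- exact: inst_layered.
- by rewrite size_n mul1n.
- by [].
- exists 1; split; first exact: ltr01.
  split; first exact: inst_sa_feasible.
  move=> al al_ge1 [T T_sol]; rewrite divr1.
  apply: (@le_pow20_of_sq_le _ _ K%:R); first by rewrite (ler_nat R 8).
  + exact: int_sol_kr_le al_ge1 T_sol.
  + by rewrite -natrX ler_nat.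
Qed.
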